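(* Let $X$ be a quasi-Polish space and $E$ an equivalence relation on $X$ such that the $E$-saturation of every open set $U\subseteq X$ is open. Define $x\preccurlyeq_E y$ iff $x\in\overline{[y]_E}$, and $x\approx_E y$ iff $x\preccurlyeq_E y$ and $y\preccurlyeq_E x$. Then the $T_0$-quotient $X/\!/E$ of the quotient space $X/E$ is a quasi-Polish space; the projection $p:X\to X/\!/E$ is continuous and open with kernel $x\approx_E y\iff\overline{[x]_E}=\overline{[y]_E}$ (so $X/\!/E$ may be identified with $X/{\approx_E}$); the specialization order of $X/\!/E$ is given by $[x]_{\approx_E}\le[y]_{\approx_E}\iff x\in\overline{[y]_E}$; and $p$ has a Borel section, i.e. $\approx_E$ has a Borel selector.
   Context: A quasi-Polish space is a topological space homeomorphic to a $\mathbf\Pi^0_2$ subset of $\mathbb S^{\mathbb N}$, where $\mathbb S=\{0<1\}$ is the Sierpiński space ($\{1\}$ open, $\{0\}$ not open), and $\mathbf\Pi^0_2$ means a countable intersection of sets of the form $U\cup F$ with $U$ open and $F$ closed. The specialization preorder of a space is $x\lesssim y\iff x\in\overline{\{y\}}$; the $T_0$-quotient identifies points with the same closure (i.e. equivalent under the symmetric part of this preorder), with the quotient topology. Quasi-Polish spaces carry a standard Borel structure. *)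

From HB Require Import structures.
From mathcomp Require Import all_boot all_order all_algebra.
From mathcomp Require Import generic_quotient.
From mathcomp Require Import all_classical topology measure.

Set Implicit Arguments.
Unset Strict Implicit.
Unset Printing Implicit Defensive.

Local Open Scope classical_set_scope.

(* false = 0, true = 1 ; open sets are the up-sets: {}, {true}, setT.         *)
Definition sierpinski : Type := bool.
HB.instance Definition _ := Choice.copy sierpinski bool.

Definition sierpinski_open (U : set sierpinski) : Prop := U false -> U true.

Lemma sierpinski_openT : sierpinski_open setT.
Proof. by []. Qed.

Lemma sierpinski_openI : setI_closed sierpinski_open.
Proof. by move=> A B hA hB [/hA ? /hB ?]. Qed.

Lemma sierpinski_open_bigU (I : Type) (f : I -> set sierpinski) :
  (forall i, sierpinski_open (f i)) -> sierpinski_open (\bigcup_i f i).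
Proof. by move=> h [i _ fi]; exists i => //; exact: h. Qed.

HB.instance Definition _ := isOpenTopological.Build sierpinski
  sierpinski_openT sierpinski_openI sierpinski_open_bigU.

Definition sierpinski_omega : topologicalType := {ptws nat -> sierpinski}.

Definition Pi02 (T : topologicalType) (A : set T) : Prop :=
  exists (U F : nat -> set T),
    [/\ (forall n, open (U n)), (forall n, closed (F n))
      & A = \bigcap_n (U n `|` F n)].

(* X is quasi-Polish iff X is homeomorphic to a Pi^0_2 subset A of S^N
   (with the subspace topology): h : X -> S^N is injective with image A,
   and the open sets of X are exactly the preimages under h of open
   subsets of S^N. *)
Definition quasi_polish (X : topologicalType) : Prop :=
  exists (A : set sierpinski_omega) (h : X -> sierpinski_omega),
    [/\ Pi02 A, injective h, range h = A
      & forall V : set X, open V <-> exists2 W, open W & V = h @^-1` W].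

Definition borel (T : topologicalType) : set (set T) :=
  smallest (sigma_algebra setT) open.

Definition borel_measurable (T U : topologicalType) (f : T -> U) : Prop :=
  forall B, borel B -> borel (f @^-1` B).

Local Open Scope quotient_scope.

Definition quotient_space (X : topologicalType) (E : equiv_rel X) : topologicalType :=
  quotient_topology {eq_quot E}.

Section T0Quotient.
Variable Y : topologicalType.

Definition same_closure : rel Y :=
  fun x y => `[< closure [set x] = closure [set y] >].

Lemma same_closure_refl : reflexive same_closure.
Proof. by move=> x; apply/asboolP. Qed.

Lemma same_closure_sym : symmetric same_closure.
Proof.
by move=> x y; apply/asboolP/asboolP => h.
Qed.

Lemma same_closure_trans : transitive same_closure.
Proof.
by move=> y x z /asboolP h1 /asboolP h2; apply/asboolP; rewrite h1 h2.
Qed.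

Canonical same_closure_equiv :=
  EquivRel same_closure same_closure_refl same_closure_sym same_closure_trans.

Definition T0_quotient : topologicalType :=
  quotient_topology {eq_quot same_closure}.

Definition T0_proj : Y -> T0_quotient := fun y => \pi_T0_quotient y.
End T0Quotient.

Definition sep_quotient (X : topologicalType) (E : equiv_rel X) : topologicalType :=
  T0_quotient (quotient_space E).

Definition sep_proj (X : topologicalType) (E : equiv_rel X) : X -> sep_quotient E :=
  fun x => T0_proj (\pi_(quotient_space E) x).

Definition eclass (X : Type) (E : rel X) (x : X) : set X := [set y | E x y].

Definition saturation (X : Type) (E : rel X) (U : set X) : set X :=
  [set x | exists2 y, U y & E x y].

Definition precE (X : topologicalType) (E : rel X) (x y : X) : Prop :=
  closure (eclass E y) x.

Definition approxE (X : topologicalType) (E : rel X) (x y : X) : Prop :=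
  precE E x y /\ precE E y x.

Definition spec_le (T : topologicalType) (a b : T) : Prop := closure [set b] a.

From HB Require Import structures.
From mathcomp Require Import all_boot all_order all_algebra.
From mathcomp Require Import generic_quotient.
From mathcomp Require Import all_classical topology measure.

(* For a continuous open map f one has x \in cl(f^-1 B) iff f x \in cl B; applied to
   the two quotient maps this gives the kernel of p and the specialization order.
   Let h embed X onto the Pi^0_2 set \bigcap_n (U_n \cup F_n) of S^N.  The images B_n
   under p of the cylinders of X form a countable base of X//E, so the code map
   y |-> (n |-> [y \in B_n]) embeds X//E into S^N.  Its range is the Pi^0_2 set of
   admissible codes: from an admissible c one builds finite sets s_0 \subset s_1 ...,
   each s_(k+1) the least valid extension of s_k, whose union is a point h x with
   code (p x) = c.  Choosing least extensions makes c |-> x Borel; precomposed with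
   the code map it is the Borel section. *)

Set Implicit Arguments.
Unset Strict Implicit.
Unset Printing Implicit Defensive.

Local Open Scope classical_set_scope.
Local Open Scope quotient_scope.

Lemma closure_openP (T : topologicalType) (A : set T) x :
  closure A x <-> forall U, open U -> U x -> exists2 a, A a & U a.
Proof.
split.
  move=> clAx U oU Ux; have [a [Aa Ua]] := clAx U (open_nbhs_nbhs (conj oU Ux)).
  by exists a.
move=> meetA B; rewrite nbhsE => -[U [oU Ux] UB].
by have [a Aa Ua] := meetA U oU Ux; exists a; split => //; exact: UB.
Qed.

Lemma not_closure1 (T : topologicalType) (x y : T) :
  ~ closure [set y] x -> exists A, nbhs x A /\ ~ A y.
Proof.
move=> /closure_openP /existsNP [U /not_implyP [oU /not_implyP [Ux noy]]].
by exists U; split; [exact: open_nbhs_nbhs|move=> Uy; apply: noy; exists y].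
Qed.

Lemma closure_sub_closed (T : topologicalType) (A B : set T) :
  closed B -> A `<=` B -> closure A `<=` B.
Proof. by move=> clB AB; rewrite (closure_id B).1 //; exact: closureS. Qed.

Lemma closure1_eqP (T : topologicalType) (a b : T) :
  closure [set a] = closure [set b] <-> closure [set b] a /\ closure [set a] b.
Proof.
have closure1_sub (u v : T) : closure [set v] u -> closure [set u] `<=` closure [set v].
  by move=> cluv; apply: closure_sub_closed; [exact: closed_closure|move=> _ ->].
split => [eqab|[clba clab]]; last by apply/seteqP; split; exact: closure1_sub.
by split; [rewrite -eqab|rewrite eqab]; exact: subset_closure.
Qed.

Lemma closure_preimage_open_map (S T : topologicalType) (f : S -> T) (B : set T) y :
  continuous f -> (forall U, open U -> open (f @` U)) ->
  closure (f @^-1` B) y <-> closure B (f y).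
Proof.
move=> fcont fopen; split.
  move=> clBy; apply/closure_openP => V oV Vfy.
  have [a Bfa Va] := (closure_openP _ _).1 clBy _ ((continuousP f).1 fcont V oV) Vfy.
  by exists (f a).
move=> clBfy; apply/closure_openP => U oU Uy.
have fUy : (f @` U) (f y) by exists y.
have [b Bb [a Ua fab]] := (closure_openP _ _).1 clBfy _ (fopen U oU) fUy.
by exists a => //; rewrite /preimage /= fab.
Qed.

Section QuotientMap.
Variables (T : topologicalType) (e : equiv_rel T).
Local Notation Q := (quotient_topology {eq_quot e}).
Local Notation pi := (\pi_Q : T -> Q).

Lemma quotient_pi_eq x y : pi x = pi y <-> e x y.
Proof. by split => /(@eqquotP _ _ {eq_quot e}). Qed.

Lemma quotient_pi_surj (a : Q) : exists x, pi x = a.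
Proof. by exists (repr a); rewrite reprK. Qed.

Lemma quotient_preimage_image (U : set T) : pi @^-1` (pi @` U) = saturation e U.
Proof.
apply/seteqP; split => x /=.
  by case=> u Uu /quotient_pi_eq eux; exists u => //; rewrite equiv_sym.
by case=> u Uu exu; exists u => //; apply/quotient_pi_eq; rewrite equiv_sym.
Qed.

Lemma quotient_pi_open : (forall U, open U -> open (saturation e U)) ->
  forall U, open U -> open (pi @` U).
Proof.
move=> sat_open U oU; rewrite /open /= /quotient_open quotient_preimage_image.
exact: sat_open.
Qed.

Lemma quotient_preimage_pi1 x : pi @^-1` [set pi x] = eclass e x.
Proof.
by apply/seteqP; split => y /=; rewrite quotient_pi_eq /eclass /= equiv_sym.
Qed.

End QuotientMap.

Section T0Quotient.
Variable Y : topologicalType.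
Local Notation q := (@T0_proj Y).

Lemma T0_proj_eq (a b : Y) : q a = q b <-> closure [set a] = closure [set b].
Proof.
by rewrite /T0_proj quotient_pi_eq; split => /asboolP.
Qed.

Lemma saturation_same_closure (V : set Y) : open V ->
  saturation (same_closure_equiv Y) V = V.
Proof.
move=> oV; apply/seteqP; split => a; last by exists a => //; exact: equiv_refl.
case=> b Vb /asboolP clab.
have : closure [set a] b by rewrite clab; exact: subset_closure.
by case/closure_openP/(_ V oV Vb) => _ ->.
Qed.

Lemma T0_proj_open (V : set Y) : open V -> open (q @` V).
Proof.
apply: quotient_pi_open => U oU.
by rewrite saturation_same_closure.
Qed.

Lemma T0_proj_continuous : continuous q.
Proof. exact: pi_continuous. Qed.

Lemma closure_T0_proj (a b : Y) : closure [set q b] (q a) <-> closure [set b] a.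
Proof.
rewrite -(closure_preimage_open_map _ _ T0_proj_continuous T0_proj_open).
suff -> : closure (q @^-1` [set q b]) = closure [set b] by [].
apply/seteqP; split; last by apply: closureS => _ ->.
apply: closure_sub_closed; first exact: closed_closure.
by move=> c /= /T0_proj_eq <-; exact: subset_closure.
Qed.

Lemma T0_quotient_kolmogorov : kolmogorov_space (T0_quotient Y).
Proof.
move=> u v; have [a <-] := quotient_pi_surj u; have [b <-] := quotient_pi_surj v.
move=> /eqP neq_ab.
have /not_andP[] : ~ (closure [set q b] (q a) /\ closure [set q a] (q b)).
  by rewrite !closure_T0_proj -closure1_eqP -T0_proj_eq.
- by move=> /not_closure1 [A [Aa nAb]]; exists A; left; rewrite !in_setE.
- by move=> /not_closure1 [A [Ab nAa]]; exists A; right; rewrite !in_setE.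
Qed.

End T0Quotient.

Section SeparatedQuotient.
Variables (X : topologicalType) (E : equiv_rel X).
Hypothesis saturation_open : forall U : set X, open U -> open (saturation E U).
Local Notation pi := (\pi_(quotient_space E) : X -> quotient_space E).
Local Notation p := (@sep_proj X E).

Lemma sep_proj_continuous : continuous p.
Proof. by apply/continuousP. Qed.

Lemma sep_proj_open (U : set X) : open U -> open (p @` U).
Proof.
move=> oU; rewrite -(image_comp pi (@T0_proj _)).
exact/T0_proj_open/quotient_pi_open.
Qed.

Lemma sep_proj_surj (a : sep_quotient E) : exists x, p x = a.
Proof.
have [b <-] := quotient_pi_surj a; have [x <-] := quotient_pi_surj b.
by exists x.
Qed.

Lemma closure_pi (x y : X) : closure [set pi y] (pi x) <-> closure (eclass E y) x.
Proof.
rewrite -(closure_preimage_open_map _ _ (@pi_continuous _ _)).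
  by rewrite quotient_preimage_pi1.
exact: quotient_pi_open.
Qed.

Lemma approxE_pi (x y : X) :
  approxE E x y <-> closure [set pi x] = closure [set pi y].
Proof. by rewrite closure1_eqP !closure_pi. Qed.

Lemma closure_eclass_pi (x y : X) :
  closure (eclass E x) = closure (eclass E y) <->
  closure [set pi x] = closure [set pi y].
Proof.
split => eqxy; apply/seteqP; split => a.
- by have [z <-] := quotient_pi_surj a; rewrite !closure_pi eqxy.
- by have [z <-] := quotient_pi_surj a; rewrite !closure_pi eqxy.
- by rewrite -!closure_pi eqxy.
- by rewrite -!closure_pi eqxy.
Qed.

Lemma sep_proj_eq (x y : X) : p x = p y <-> approxE E x y.
Proof. by rewrite /sep_proj T0_proj_eq approxE_pi. Qed.

Lemma approxE_closure (x y : X) :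
  approxE E x y <-> closure (eclass E x) = closure (eclass E y).
Proof. by rewrite approxE_pi closure_eclass_pi. Qed.

Lemma spec_le_sep_proj (x y : X) : spec_le (p x) (p y) <-> closure (eclass E y) x.
Proof. by rewrite /spec_le /sep_proj closure_T0_proj closure_pi. Qed.

End SeparatedQuotient.

Lemma open_implies (T : topologicalType) (R : Prop) (O : set T) :
  open O -> open [set w | R -> O w].
Proof.
have [r|nr] := pselect R => oO.
  rewrite (_ : [set w | R -> O w] = O) //.
  by apply/seteqP; split => w /=; [apply|move=> ? _].
rewrite (_ : [set w | R -> O w] = setT); first exact: openT.
by apply/seteqP; split => w // _ /nr.
Qed.

Lemma open_forall_mem (T : topologicalType) (I : eqType) (O : I -> set T) (s : seq I) :
  (forall i, open (O i)) -> open [set w | forall i, i \in s -> O i w].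
Proof.
move=> oO; elim: s => [|i s IHs].
  by rewrite (_ : [set w | _] = setT); [exact: openT|apply/seteqP; split].
rewrite (_ : [set w | _] = O i `&` [set w | forall j, j \in s -> O j w]).
  exact: openI.
apply/seteqP; split => w /=.
  by move=> Ow; split => [|j js]; apply: Ow; rewrite inE ?eqxx ?js ?orbT.
by case=> Oiw Osw j; rewrite inE => /orP[/eqP ->//|/Osw].
Qed.

Local Notation SN := sierpinski_omega.

Definition cylinder (s : seq nat) : set SN := [set z | forall i, i \in s -> z i].

(* The least point of [cylinder s]; as open subsets of S^N are upward closed, an open
   set contains [cylinder s] iff it contains [pt_of_seq s]. *)
Definition pt_of_seq (s : seq nat) : SN := fun i => i \in s.

Lemma coord_open (i : nat) : open [set z : SN | z i].
Proof.
have : continuous (fun z : SN => z i) := @proj_continuous nat (fun=> sierpinski) i.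
by move/continuousP/(_ [set true]); apply.
Qed.

Lemma cylinder_open (s : seq nat) : open (cylinder s).
Proof. exact: open_forall_mem coord_open. Qed.

Lemma sierpinski_nbhs (b : sierpinski) (A : set sierpinski) : nbhs b A ->
  A true /\ (b = false -> A = setT).
Proof.
rewrite nbhsE => -[B [oB Bb BA]]; split; first by apply: BA; case: b Bb => //; exact: oB.
by move=> bF; subst b; apply/seteqP; split => // -[] _; apply: BA => //; exact: oB.
Qed.

Lemma cylinder_base (O : set SN) (z : SN) : open O -> O z ->
  exists s, cylinder s z /\ cylinder s `<=` O.
Proof.
move=> oO Oz.
pose F := filter_from [set s | cylinder s z] cylinder.
have FF : Filter F.
  apply: filter_from_filter; first by exists [::].
  move=> s1 s2 s1z s2z; exists (s1 ++ s2).
    by move=> i; rewrite mem_cat => /orP[/s1z|/s2z].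
  by move=> w ws; split => i iS; apply: ws; rewrite mem_cat iS ?orbT.
suff /(_ O (open_nbhs_nbhs (conj oO Oz))) [s zs sO] : F --> z by exists s.
apply/cvg_sup => i; apply/cvg_image => //.
  by apply/seteqP; split => // b _; exists (fun=> b).
move=> A /= /sierpinski_nbhs [At Afalse].
exists ((fun w : SN => w i) @^-1` A); last first.
  by apply/seteqP; split => [b [w Aw <-] //|b Ab]; exists (fun=> b).
case zi : (z i).
  exists [:: i]; first by move=> j; rewrite inE => /eqP ->.
  by move=> w /= /(_ i); rewrite inE eqxx => /(_ isT) ->.
by exists [::] => // w _ /=; rewrite Afalse.
Qed.

Lemma open_upward (O : set SN) (x y : SN) : open O -> O x ->
  (forall i, x i -> y i) -> O y.
Proof.
move=> oO Ox xy; have [s [sx sO]] := cylinder_base oO Ox.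
by apply: sO => i /sx /xy.
Qed.

Definition code_of (T : Type) (B : nat -> set T) (y : T) : SN := fun n => `[< B n y >].

Lemma code_ofE (T : Type) (B : nat -> set T) y n : code_of B y n <-> B n y.
Proof. by split => /asboolP. Qed.

Section CountableBase.
Variables (T : topologicalType) (B : nat -> set T).
Hypothesis B_open : forall n, open (B n).
Hypothesis B_base : forall V y, open V -> V y -> exists2 n, B n y & B n `<=` V.

Lemma code_of_open_preimage (O : set SN) : open O -> open (code_of B @^-1` O).
Proof.
move=> oO.
rewrite (_ : _ @^-1` _ =
  \bigcup_(s in [set s | cylinder s `<=` O]) [set y | forall i, i \in s -> B i y]).
  by apply: bigcup_open => s _; exact: open_forall_mem.
apply/seteqP; split => y /=.
  case/(cylinder_base oO) => s [sy sO]; by exists s => // i /sy /asboolP.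
by case=> s sO By; apply: sO => i /By /asboolP.
Qed.

Lemma code_of_openP (V : set T) :
  open V <-> exists2 O, open O & V = code_of B @^-1` O.
Proof.
split => [oV|[O oO ->]]; last exact: code_of_open_preimage.
exists (\bigcup_(n in [set n | B n `<=` V]) [set z : SN | z n]).
  by apply: bigcup_open => n _; exact: coord_open.
apply/seteqP; split => y /=.
  by case/(B_base oV) => n Bny BnV; exists n => //; exact/asboolP.
by case=> n BnV /asboolP /BnV.
Qed.

Lemma code_of_eq_nbhs (a b : T) : code_of B a = code_of B b ->
  forall A, nbhs a A -> A b.
Proof.
move=> eq_ab A; rewrite nbhsE => -[V [oV Va] VA].
have [n Bna BnV] := B_base oV Va.
apply/VA/BnV; have : code_of B a n by exact/asboolP.
by rewrite eq_ab => /asboolP.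
Qed.

Lemma code_of_inj : kolmogorov_space T -> injective (code_of B).
Proof.
move=> T0 a b eq_ab; apply: contrapT => /eqP /T0 [A].
rewrite !in_setE => -[[Aa nAb]|[Ab nAa]].
- exact: nAb (code_of_eq_nbhs eq_ab Aa).
- exact: nAa (code_of_eq_nbhs (esym eq_ab) Ab).
Qed.

End CountableBase.

Definition least (P : nat -> Prop) : nat :=
  if pselect (exists n, `[< P n >]) is left exP then ex_minn exP else 0%N.

Lemma leastP (P : nat -> Prop) n : P n ->
  P (least P) /\ forall m, P m -> (least P <= m)%N.
Proof.
move=> Pn; rewrite /least; case: pselect => [exP|]; last by case; exists n; exact/asboolP.
case: ex_minnP => m /asboolP Pm min_m; split => // k Pk; apply: min_m; exact/asboolP.
Qed.

Lemma least_eq (P : nat -> Prop) n : least P = n <->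
  (P n /\ forall m, (m < n)%N -> ~ P m) \/ (n = 0%N /\ forall m, ~ P m).
Proof.
split.
  move=> <-; have [[m Pm]|noP] := pselect (exists m, P m).
    have [Pl min_l] := leastP Pm; left; split => // k kl Pk.
    by have := min_l _ Pk; rewrite leqNgt kl.
  right; split => [|m Pm]; last by apply: noP; exists m.
  rewrite /least; case: pselect => // exP; case: noP.
  by have [m /asboolP Pm] := exP; exists m.
case=> [[Pn min_n]|[-> noP]].
  have [Pl min_l] := leastP Pn; apply/eqP; rewrite eqn_leq min_l //=.
  by rewrite leqNgt; apply/negP => /min_n.
rewrite /least; case: pselect => // exP; exfalso.
by have [m /asboolP /noP] := exP.
Qed.

(* [c] is meant as the code of a point of X//E, [W m] as an open subset of S^N whose
   trace on X is the preimage of the m-th basic open set, and \bigcap_n (U n `|` F n)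
   as the image of X. *)
Section ApproximatingSequence.
Variables (U F W : nat -> set SN).
Hypothesis U_open : forall n, open (U n).
Hypothesis F_closed : forall n, closed (F n).
Hypothesis W_open : forall n, open (W n).

Definition admissible_step (c : nat -> bool) (k : nat) (s t : seq nat) : Prop :=
  [/\ {subset s <= t}, c (CodeSeq.code t),
      (forall n, (n <= k)%N -> ~ F n (pt_of_seq s) -> U n (pt_of_seq t)) &
      (forall m, (m <= k)%N -> c m -> W m (pt_of_seq t))].

Definition admissible (c : nat -> bool) : Prop :=
  [/\ c (CodeSeq.code [::]),
      (forall s k, c (CodeSeq.code s) -> exists t, admissible_step c k s t) &
      (forall s m, c (CodeSeq.code s) -> W m (pt_of_seq s) -> c m)].

(* Taking the least valid extension, instead of an arbitrary one, is what makes
   [approx] Borel in [c] (lemma [Gpred_approx_eq]). *)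
Fixpoint approx (c : nat -> bool) (k : nat) : seq nat :=
  if k is k'.+1 then
    CodeSeq.decode
      (least (fun n => admissible_step c k' (approx c k') (CodeSeq.decode n)))
  else [::].

Definition approx_limit (c : nat -> bool) : SN :=
  fun i => `[< exists k, i \in approx c k >].

Lemma approx_le_limit c k i : pt_of_seq (approx c k) i -> approx_limit c i.
Proof. by move=> ik; apply/asboolP; exists k. Qed.

Section Admissible.
Variable c : nat -> bool.
Hypothesis c_adm : admissible c.

Let approx_step_of_code k : c (CodeSeq.code (approx c k)) ->
  admissible_step c k (approx c k) (approx c k.+1).
Proof.
move=> ck; case: c_adm => _ c_step _; have [t st] := c_step _ k ck.
have st' : admissible_step c k (approx c k) (CodeSeq.decode (CodeSeq.code t)).
  by rewrite CodeSeq.codeK.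
by have [] := leastP
  (P := fun n => admissible_step c k (approx c k) (CodeSeq.decode n)) st'.
Qed.

Lemma approx_code k : c (CodeSeq.code (approx c k)).
Proof.
case: c_adm => c0 _ _; elim: k => [//|k IHk].
by case: (approx_step_of_code IHk).
Qed.

Lemma approx_step k : admissible_step c k (approx c k) (approx c k.+1).
Proof. exact/approx_step_of_code/approx_code. Qed.

Lemma approx_mono k l : (k <= l)%N -> {subset approx c k <= approx c l}.
Proof.
move/subnK => <-; elim: (l - k)%N => [//|d IHd] i /IHd.
by rewrite addSn; case: (approx_step (d + k)) => + _ _ _; apply.
Qed.

Lemma sub_approx (s : seq nat) : (forall i, i \in s -> approx_limit c i) ->
  exists K, {subset s <= approx c K}.
Proof.
elim: s => [|i s IHs] s_lim; first by exists 0%N.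
have [K1 sK1] : exists K, {subset s <= approx c K}.
  by apply: IHs => j js; apply: s_lim; rewrite inE js orbT.
have /asboolP [K2 iK2] : approx_limit c i by apply: s_lim; rewrite inE eqxx.
exists (maxn K1 K2) => j; rewrite inE => /orP[/eqP ->|/sK1].
  by apply: approx_mono iK2; rewrite leq_maxr.
by apply: approx_mono; rewrite leq_maxl.
Qed.

Lemma open_approx_limit (O : set SN) : open O -> O (approx_limit c) ->
  forall k, exists2 K, (k <= K)%N & O (pt_of_seq (approx c K)).
Proof.
move=> oO Olim k; have [s [s_lim sO]] := cylinder_base oO Olim.
have [K sK] := sub_approx s_lim; exists (maxn k K); first exact: leq_maxl.
by apply: sO => i /sK; apply: approx_mono; rewrite leq_maxr.
Qed.

Lemma approx_limit_UF n : U n (approx_limit c) \/ F n (approx_limit c).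
Proof.
have [|nF] := pselect (F n (approx_limit c)); [by right|left].
have [K nK nFK] := open_approx_limit (closed_openC (@F_closed n)) nF n.
have [_ _ step_U _] := approx_step K.
exact: open_upward (U_open n) (step_U n nK nFK) (@approx_le_limit c K.+1).
Qed.

Lemma approx_limit_W m : W m (approx_limit c) <-> c m.
Proof.
split => [Wm|cm].
  have [K _ WK] := open_approx_limit (W_open m) Wm 0%N.
  by case: c_adm => _ _; apply; [exact: approx_code|exact: WK].
have [_ _ _ step_W] := approx_step m.
exact: open_upward (W_open m) (step_W m (leqnn m) cm) (@approx_le_limit c m.+1).
Qed.

End Admissible.
End ApproximatingSequence.

Section SigmaAlgebraPredicates.
Variables (T : Type) (G : set (set T)).
Hypothesis G_salg : sigma_algebra setT G.

Definition Gpred (P : T -> Prop) := G [set t | P t].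

Lemma Gpred_ext (P Q : T -> Prop) : (forall t, P t <-> Q t) -> Gpred Q -> Gpred P.
Proof.
move=> PQ; rewrite /Gpred (_ : [set t | P t] = [set t | Q t]) //.
by apply/seteqP; split => t /PQ.
Qed.

Lemma GpredN P : Gpred P -> Gpred (fun t => ~ P t).
Proof.
case: G_salg => _ GC _ /GC; apply: Gpred_ext.
by move=> t; split => [nP|[]//]; split.
Qed.

Lemma Gpred_const (R : Prop) : Gpred (fun=> R).
Proof.
case: G_salg => G0 GC _; have [r|nr] := pselect R.
  by apply: Gpred_ext (GC _ G0) => t; split => // _; split.
exact: Gpred_ext G0.
Qed.

Lemma Gpred_exists (I : countType) (P : I -> T -> Prop) :
  (forall i, Gpred (P i)) -> Gpred (fun t => exists i, P i t).
Proof.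
move=> GP; pose Q n t := if unpickle n is Some i then P i t else False.
apply: (@Gpred_ext _ (fun t => exists n, Q n t)).
  move=> t; split => [[i Pi]|[n]]; first by exists (pickle i); rewrite /Q pickleK.
  by rewrite /Q; case: unpickle => // i Pi; exists i.
case: G_salg => _ _ /(_ (fun n => [set t | Q n t])) GU.
apply: Gpred_ext (GU _) => [t|n]; first by split => [[n]|[n _]]; exists n.
by rewrite /Q; case: unpickle => [i|]; [exact: GP|exact: Gpred_const].
Qed.

Lemma Gpred_forall (I : countType) (P : I -> T -> Prop) :
  (forall i, Gpred (P i)) -> Gpred (fun t => forall i, P i t).
Proof.
move=> GP; apply: (@Gpred_ext _ (fun t => ~ exists i, ~ P i t)).
  move=> t; split => [Pt [i]|nP i]; first exact.
  by apply: contrapT => nPi; apply: nP; exists i.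
by apply/GpredN/Gpred_exists => i; exact/GpredN.
Qed.

Lemma GpredU P Q : Gpred P -> Gpred Q -> Gpred (fun t => P t \/ Q t).
Proof.
move=> GP GQ; apply: (@Gpred_ext _ (fun t => exists b : bool, if b then P t else Q t)).
  by move=> t; split => [[]|[[]]]; [exists true|exists false|left|right].
by apply: Gpred_exists => -[].
Qed.

Lemma GpredI P Q : Gpred P -> Gpred Q -> Gpred (fun t => P t /\ Q t).
Proof.
move=> GP GQ; apply: (@Gpred_ext _ (fun t => forall b : bool, if b then P t else Q t)).
  by move=> t; split => [[Pt Qt] []|PQ] //; split; [exact: (PQ true)|exact: (PQ false)].
by apply: Gpred_forall => -[].
Qed.

Lemma Gpred_imply P Q : Gpred P -> Gpred Q -> Gpred (fun t => P t -> Q t).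
Proof.
move=> GP GQ; apply: (@Gpred_ext _ (fun t => ~ P t \/ Q t)); last exact/GpredU/GQ/GpredN.
by move=> t; split => [PQ|[nP /nP|]//]; have [/PQ|] := pselect (P t); [right|left].
Qed.

Lemma Gpred_least_eq (P : nat -> T -> Prop) j : (forall n, Gpred (P n)) ->
  Gpred (fun t => least (fun n => P n t) = j).
Proof.
move=> GP; apply: (Gpred_ext (fun t => least_eq _ _)).
apply: GpredU; apply: GpredI.
- exact: GP.
- by apply: Gpred_forall => m; apply: Gpred_imply; [exact: Gpred_const|exact/GpredN].
- exact: Gpred_const.
- by apply: Gpred_forall => m; exact/GpredN.
Qed.

Variables (U F W : nat -> set SN) (cc : T -> nat -> bool).
Hypothesis G_cc : forall n, Gpred (fun t => cc t n).

Lemma Gpred_admissible_step k s u :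
  Gpred (fun t => admissible_step U F W (cc t) k s u).
Proof.
apply: (@Gpred_ext _ (fun t => ({subset s <= u} /\ cc t (CodeSeq.code u)) /\
    ((forall n, (n <= k)%N -> ~ F n (pt_of_seq s) -> U n (pt_of_seq u)) /\
     (forall m, (m <= k)%N -> cc t m -> W m (pt_of_seq u))))).
  by move=> t; split => [[]|[[] ? ? []]].
apply: GpredI; apply: GpredI; try exact: Gpred_const; first exact: G_cc.
apply: Gpred_forall => m; apply: Gpred_imply; first exact: Gpred_const.
by apply: Gpred_imply; [exact: G_cc|exact: Gpred_const].
Qed.

Lemma Gpred_approx_eq k s : Gpred (fun t => approx U F W (cc t) k = s).
Proof.
elim: k s => [|k IHk] s /=; first exact: Gpred_const.
apply: (@Gpred_ext _ (fun t => exists r, approx U F W (cc t) k = r /\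
    least (fun n => admissible_step U F W (cc t) k r (CodeSeq.decode n)) =
      CodeSeq.code s)).
  move=> t; split => [<-|[r [-> ->]]]; last by rewrite CodeSeq.codeK.
  by exists (approx U F W (cc t) k); rewrite CodeSeq.decodeK.
apply: Gpred_exists => r; apply: GpredI; first exact: IHk.
by apply: Gpred_least_eq => n; exact: Gpred_admissible_step.
Qed.

Lemma Gpred_approx_limit (O : set SN) : open O -> (forall t, admissible U F W (cc t)) ->
  Gpred (fun t => O (approx_limit U F W (cc t))).
Proof.
move=> oO cc_adm.
apply: (@Gpred_ext _ (fun t => exists k s, approx U F W (cc t) k = s /\ O (pt_of_seq s))).
  move=> t; split => [/(open_approx_limit (cc_adm t) oO)/(_ 0%N) [K _ OK]|].
    by exists K, (approx U F W (cc t) K).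
  by case=> K [s [<- Os]]; apply: open_upward oO Os _; exact: approx_le_limit.
apply: Gpred_exists => k; apply: Gpred_exists => s.
by apply: GpredI; [exact: Gpred_approx_eq|exact: Gpred_const].
Qed.

End SigmaAlgebraPredicates.

Lemma Pi02_bigcap (T : topologicalType) (I : countType) (A : set T) (U F : I -> set T) :
  (forall i, open (U i)) -> (forall i, closed (F i)) ->
  (forall x, A x <-> forall i, U i x \/ F i x) -> Pi02 A.
Proof.
move=> oU cF A_UF.
exists (fun n => if unpickle n is Some i then U i else setT).
exists (fun n => if unpickle n is Some i then F i else setT).
split.
- by move=> n; case: unpickle => [i|]; [exact: oU|exact: openT].
- by move=> n; case: unpickle => [i|]; [exact: cF|exact: closedT].
apply/seteqP; split => x.
  by move/A_UF => UFx n _; case: unpickle => [i|]; [exact: UFx|left].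
by move=> UFx; apply/A_UF => i; have := UFx (pickle i) Logic.I; rewrite pickleK.
Qed.

Section AdmissiblePi02.
Variables (U F W : nat -> set SN).

Definition admissible_index := (unit + (seq nat * nat * seq nat) + (seq nat * nat))%type.

(* Admissibility quantifies over the c-dependent set of [m <= k] with [c m]; fixing
   it as [M] turns each instance into an open-or-closed condition on [c]. *)
Definition step_within (s : seq nat) (k : nat) (M t : seq nat) : Prop :=
  [/\ {subset s <= t},
      (forall n, (n <= k)%N -> ~ F n (pt_of_seq s) -> U n (pt_of_seq t)) &
      (forall m, m \in M -> W m (pt_of_seq t))].

Definition admissible_U (i : admissible_index) : set SN :=
  match i with
  | inl (inl _) => [set c | c (CodeSeq.code [::])]
  | inl (inr (s, k, M)) => \bigcup_(t in step_within s k M) [set c | c (CodeSeq.code t)]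
  | inr (s, m) => [set c | W m (pt_of_seq s) -> c m]
  end.

Definition admissible_F (i : admissible_index) : set SN :=
  match i with
  | inl (inl _) => set0
  | inl (inr (s, k, M)) => ~` cylinder (CodeSeq.code s :: M)
  | inr (s, m) => ~` [set c | W m (pt_of_seq s) -> c (CodeSeq.code s)]
  end.

Lemma admissible_U_open i : open (admissible_U i).
Proof.
case: i => [[_|[[s k] M]]|[s m]] /=.
- exact: coord_open.
- by apply: bigcup_open => t _; exact: coord_open.
- exact/open_implies/coord_open.
Qed.

Lemma admissible_F_closed i : closed (admissible_F i).
Proof.
case: i => [[_|[[s k] M]]|[s m]] /=.
- exact: closed0.
- by rewrite closedC; exact: cylinder_open.
- by rewrite closedC; exact/open_implies/coord_open.
Qed.

Lemma admissible_cond (c : SN) :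
  admissible U F W c <-> forall i, admissible_U i c \/ admissible_F i c.
Proof.
split.
  case=> c0 c_step c_W [[_|[[s k] M]]|[s m]] /=; first by left.
    have [sM_c|] := pselect (cylinder (CodeSeq.code s :: M) c); [left|by right].
    have cs : c (CodeSeq.code s) by apply: sM_c; exact: mem_head.
    have [t [st ct t_U t_W]] := c_step s (maxn k (\max_(m <- M) m)) cs.
    exists t => //; split => // [n nk|m mM]; first by apply: t_U; rewrite leq_max nk.
    apply: t_W; last by apply: sM_c; rewrite inE mM orbT.
    exact: leq_trans (leq_bigmax_seq (F := id) m mM isT) (leq_maxr _ _).
  have [Wms|nW] := pselect (W m (pt_of_seq s)); last by left.
  have [cs|ncs] := pselect (c (CodeSeq.code s)); first by left => _; exact: c_W cs Wms.
  by right => /(_ Wms) /ncs.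
move=> cond; split.
- by case: (cond (inl (inl tt))).
- move=> s k cs; pose M := [seq m <- iota 0 k.+1 | c m].
  case: (cond (inl (inr (s, k, M)))) => /= [[t [st t_U t_W] ct]|nsM]; last first.
    exfalso; apply: nsM => i; rewrite inE => /orP[/eqP -> //|].
    by rewrite mem_filter => /andP[].
  exists t; split => // m mk cm; apply: t_W.
  by rewrite mem_filter cm mem_iota /= add0n ltnS.
- move=> s m cs Wms; case: (cond (inr (s, m))) => /=; first exact.
  by move=> /(_ (fun=> cs)).
Qed.

Lemma admissible_Pi02 : Pi02 [set c : SN | admissible U F W c].
Proof.
exact: Pi02_bigcap admissible_U_open admissible_F_closed admissible_cond.
Qed.

End AdmissiblePi02.

Section QuasiPolishQuotient.
Variables (X : topologicalType) (E : equiv_rel X).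
Hypothesis saturation_open : forall U : set X, open U -> open (saturation E U).
Variables (h : X -> SN) (U F : nat -> set SN).
Hypothesis U_open : forall n, open (U n).
Hypothesis F_closed : forall n, closed (F n).
Hypothesis h_range : range h = \bigcap_n (U n `|` F n).
Hypothesis h_open : forall V : set X, open V <-> exists2 O, open O & V = h @^-1` O.

Local Notation Y := (sep_quotient E).
Local Notation p := (@sep_proj X E).

Definition basic (n : nat) : set Y := p @` (h @^-1` cylinder (CodeSeq.decode n)).

Local Notation code := (code_of basic).

Lemma basic_code (s : seq nat) : basic (CodeSeq.code s) = p @` (h @^-1` cylinder s).
Proof. by rewrite /basic CodeSeq.codeK. Qed.

Lemma basic_open n : open (basic n).
Proof.
apply: sep_proj_open => //; apply/h_open.
by exists (cylinder (CodeSeq.decode n)) => //; exact: cylinder_open.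
Qed.

Lemma basic_base (V : set Y) y : open V -> V y -> exists2 n, basic n y & basic n `<=` V.
Proof.
move=> oV Vy; have [x pxy] := sep_proj_surj y; subst y.
have /h_open [O oO pV_hO] : open (p @^-1` V) by exact: oV.
have [s [s_hx sO]] : exists s, cylinder s (h x) /\ cylinder s `<=` O.
  by apply: cylinder_base oO _; rewrite -[O _]/((h @^-1` O) x) -pV_hO.
exists (CodeSeq.code s); rewrite basic_code; first by exists x.
by move=> _ [x' /sO hx' <-]; rewrite -[V _]/((p @^-1` V) x') pV_hO.
Qed.

Lemma code_inj : injective code.
Proof. exact: code_of_inj basic_base (@T0_quotient_kolmogorov _). Qed.

Lemma exists_basic_lift : exists W : nat -> set SN,
  (forall n, open (W n)) /\ forall n x, W n (h x) <-> basic n (p x).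
Proof.
have /boolp.choice [W W_lift] :
    forall n, exists O : set SN, open O /\ h @^-1` O = p @^-1` basic n.
  move=> n; have /h_open [O oO ->] : open (p @^-1` basic n) by exact: basic_open.
  by exists O.
exists W; split => [n|n x]; first by case: (W_lift n).
by case: (W_lift n) => _ /seteqP [W_p p_W]; split => [/W_p|/p_W].
Qed.

Section BasicLift.
Variable W : nat -> set SN.
Hypothesis W_open : forall n, open (W n).
Hypothesis W_basic : forall n x, W n (h x) <-> basic n (p x).

Lemma code_step y s k : code y (CodeSeq.code s) ->
  exists t, admissible_step U F W (code y) k s t.
Proof.
rewrite code_ofE basic_code => -[x /= s_hx <-{y}].
have hx_UF n : U n (h x) \/ F n (h x).
  have : range h (h x) by exists x.
  by rewrite h_range => /(_ n Logic.I).
(* Each requirement of stage k holds at h x and is open, so a single cylinder around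
   h x meets all of them. *)
pose O n := [set w | ~ F n (pt_of_seq s) -> U n w] `&` [set w | code (p x) n -> W n w].
pose Ok := [set w | forall n, n \in iota 0 k.+1 -> O n w].
have oOk : open Ok.
  by apply: open_forall_mem => n; apply: openI; exact: open_implies.
have [t [t_hx tO]] : exists t, cylinder t (h x) /\ cylinder t `<=` Ok.
  apply: cylinder_base oOk _ => n _; split.
    move=> nFs; case: (hx_UF n) => // Fhx; exfalso.
    by have /(_ Fhx) := open_upward (closed_openC (@F_closed n)) nFs s_hx.
  by move/code_ofE/W_basic.
have Ot n : (n <= k)%N -> O n (pt_of_seq t).
  by move=> nk; apply: tO => //; rewrite mem_iota.
have le_cat i : pt_of_seq t i -> pt_of_seq (s ++ t) i.
  by rewrite /pt_of_seq mem_cat orbC => ->.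
exists (s ++ t); split.
- by move=> i; rewrite mem_cat => ->.
- rewrite code_ofE basic_code; exists x => //= i.
  by rewrite mem_cat => /orP[/s_hx|/t_hx].
- by move=> n nk /(Ot n nk).1 Ut; exact: open_upward (U_open n) Ut le_cat.
- by move=> m mk /(Ot m mk).2 Wt; exact: open_upward (W_open m) Wt le_cat.
Qed.

Lemma code_admissible y : admissible U F W (code y).
Proof.
split; [|exact: code_step|].
- by have [x <-] := sep_proj_surj y; rewrite code_ofE basic_code; exists x.
- move=> s m; rewrite code_ofE basic_code => -[x s_hx <-{y}] Wms.
  by apply/code_ofE/W_basic; exact: open_upward (W_open m) Wms s_hx.
Qed.

Lemma approx_limit_range c : admissible U F W c -> exists x, h x = approx_limit U F W c.
Proof.
move=> c_adm; have : range h (approx_limit U F W c).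
  by rewrite h_range => n _; exact: approx_limit_UF.
by case=> x _ hx; exists x.
Qed.

Lemma code_approx_limit c x : admissible U F W c -> h x = approx_limit U F W c ->
  code (p x) = c.
Proof.
move=> c_adm hx; apply/funext => n; apply/idP/idP.
  by move/code_ofE/W_basic; rewrite hx; move/(approx_limit_W W_open c_adm).
by move/(approx_limit_W W_open c_adm); rewrite -hx; move/W_basic/code_ofE.
Qed.

Lemma range_code : range code = [set c | admissible U F W c].
Proof.
apply/seteqP; split => [_ [y _ <-]|c c_adm]; first exact: code_admissible.
have [x hx] := approx_limit_range c_adm.
by exists (p x) => //; exact: code_approx_limit.
Qed.

Lemma code_borel_section :
  exists s : Y -> X, (forall y, p (s y) = y) /\ borel_measurable s.
Proof.
have /boolp.choice [s hs] : forall y : Y, exists x, h x = approx_limit U F W (code y).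
  by move=> y; exact/approx_limit_range/code_admissible.
exists s; split => [y|].
  by apply: code_inj; exact: code_approx_limit (code_admissible y) (hs y).
have borel_salg : sigma_algebra setT (@borel Y) by exact: smallest_sigma_algebra.
suff sub : @borel X `<=` image_set_system setT s (@borel Y).
  by move=> B /sub; rewrite /image_set_system /= setTI.
apply: smallest_sub; first exact: sigma_algebra_image.
move=> _ /h_open [O oO ->]; rewrite /image_set_system /= setTI.
have : Gpred (@borel Y) (fun y => O (approx_limit U F W (code y))).
  apply: Gpred_approx_limit => // [n|]; last exact: code_admissible.
  rewrite /Gpred (_ : [set y | _] = basic n).
    exact: sub_sigma_algebra (basic_open n).
  by apply/seteqP; split => y /code_ofE.
rewrite /Gpred (_ : [set y | _] = s @^-1` (h @^-1` O)) //.
by apply/seteqP; split => y; rewrite /= hs.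
Qed.

End BasicLift.

Lemma sep_quotient_quasi_polish : quasi_polish Y.
Proof.
have [W [W_open W_basic]] := exists_basic_lift.
exists [set c | admissible U F W c], code; split.
- exact: admissible_Pi02.
- exact: code_inj.
- exact: range_code W_open W_basic.
- exact: code_of_openP basic_open basic_base.
Qed.

Lemma sep_proj_borel_section :
  exists s : Y -> X, (forall y, p (s y) = y) /\ borel_measurable s.
Proof.
have [W [W_open W_basic]] := exists_basic_lift.
exact: code_borel_section W_open W_basic.
Qed.

End QuasiPolishQuotient.

Unset Implicit Arguments.

Theorem proposition2p1 (X : topologicalType) (E : equiv_rel X) :
  quasi_polish X ->
  (forall U : set X, open U -> open (saturation E U)) ->
  let p := @sep_proj X E in
  [/\ quasi_polish (sep_quotient E),
      continuous p /\ (forall U : set X, open U -> open (p @` U)),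
      (forall x y : X, (p x = p y <-> approxE E x y) /\
                       (approxE E x y <-> closure (eclass E x) = closure (eclass E y))),
      (forall x y : X, spec_le (p x) (p y) <-> closure (eclass E y) x)
    & exists s : sep_quotient E -> X,
        (forall q, p (s q) = q) /\ borel_measurable s].
Proof.
move=> [_ [h [[U [F [U_open F_closed ->]]] _ h_range h_open]]] sat_open p.
split.
- exact: (sep_quotient_quasi_polish sat_open U_open F_closed h_range h_open).
- by split; [exact: sep_proj_continuous|exact: sep_proj_open].
- by move=> x y; split; [exact: sep_proj_eq|exact: approxE_closure].
- exact: spec_le_sep_proj.
- exact: (sep_proj_borel_section sat_open U_open F_closed h_range h_open).
Qed.
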